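(* Let $\mu$ be a fixed probability distribution on a measurable space $\mathcal{X}$, $\varepsilon\ge0$, $\delta\in[0,1]$. For $\lambda\in[0,1]$ define the sampler $\mathbf{Q}_\lambda$ on all distributions $P$ on $\mathcal{X}$ by $\mathbf{Q}_\lambda(A\mid P)=\lambda P(A)+(1-\lambda)\mu(A)$ for measurable $A\subseteq\mathcal{X}$. If $\mathbf{Q}_{\lambda_1}$ is $(\varepsilon,\delta)$-LDP for some $\lambda_1\in[0,1]$, then $\mathbf{Q}_{\lambda_2}$ is $(\varepsilon,\delta)$-LDP for every $\lambda_2\in[0,\lambda_1]$.
   Context: A sampler $\mathbf{Q}$ defined on a class of distributions is $(\varepsilon,\delta)$-LDP if $\mathbf{Q}(A\mid P)\le e^\varepsilon\mathbf{Q}(A\mid P')+\delta$ for every pair of inputs $P,P'$ in its domain and every measurable $A$. *)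

From mathcomp Require Import all_boot all_order all_algebra.
From mathcomp Require Import all_classical all_reals all_analysis.
Set Implicit Arguments. Unset Strict Implicit. Unset Printing Implicit Defensive.
Import Order.TTheory GRing.Theory Num.Theory.
Local Open Scope ring_scope.
Local Open Scope classical_set_scope.

Definition mix_sampler d (T : measurableType d) (R : realType)
  (mu : probability T R) (lam : R) (P : probability T R) (A : set T) : \bar R :=
  (lam%:E * P A + (1 - lam)%:E * mu A)%E.

Definition sampler_LDP d (T : measurableType d) (R : realType)
  (Q : probability T R -> set T -> \bar R) (eps delta : R) : Prop :=
  forall (P P' : probability T R) (A : set T), measurable A ->
    (Q P A <= (expR eps)%:E * Q P' A + delta%:E)%E.

(** The sampler [Q_l2] is a post-processing of [Q_l1]: with [t = l2 / l1],
    [Q_l2(A | P) = t Q_l1(A | P) + (1 - t) mu(A)].  Mixing both sides of the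
    inequality [Q_l1(A | P) <= e^eps Q_l1(A | P') + delta] with the same
    [mu(A)] preserves it, because [mu(A) <= e^eps mu(A)] and [t delta <= delta]. *)

From mathcomp Require Import all_boot all_order all_algebra.
From mathcomp Require Import all_classical all_reals all_analysis.
From mathcomp Require Import ring lra.
Import Order.TTheory GRing.Theory Num.Theory.
Local Open Scope ring_scope.

Section MixtureInequalities.
Variable R : realFieldType.

Lemma mix_le_expD (t m q q' E dl : R) :
  0 <= t <= 1 -> 0 <= m -> 1 <= E -> 0 <= dl -> q <= E * q' + dl ->
  t * q + (1 - t) * m <= E * (t * q' + (1 - t) * m) + dl.
Proof.
move=> /andP[t_ge0 t_le1] m_ge0 E_ge1 dl_ge0 le_q.
have tq_le : t * q <= t * (E * q' + dl) by rewrite ler_wpM2l.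
have m_le : 0 <= (E - 1) * ((1 - t) * m).
  by rewrite !mulr_ge0 // subr_ge0.
nra.
Qed.

Lemma mix_nested (l1 l2 p m : R) : l1 != 0 ->
  l2 * p + (1 - l2) * m
  = l2 / l1 * (l1 * p + (1 - l1) * m) + (1 - l2 / l1) * m.
Proof. by move=> l1_neq0; field. Qed.

Lemma mix_le_expD_antitone (l1 l2 m p p' E dl : R) :
  0 <= l2 <= l1 -> 0 <= m -> 1 <= E -> 0 <= dl ->
  l1 * p + (1 - l1) * m <= E * (l1 * p' + (1 - l1) * m) + dl ->
  l2 * p + (1 - l2) * m <= E * (l2 * p' + (1 - l2) * m) + dl.
Proof.
move=> /andP[l2_ge0 l2_le_l1] m_ge0 E_ge1 dl_ge0.
have [l1_eq0|l1_neq0] := eqVneq l1 0.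
  have l2_eq0 : l2 = 0 by apply/eqP; rewrite eq_le l2_ge0 -l1_eq0 l2_le_l1.
  by rewrite l1_eq0 l2_eq0.
rewrite (mix_nested _ l2 p m l1_neq0) (mix_nested _ l2 p' m l1_neq0).
apply: mix_le_expD => //.
have l1_gt0 : 0 < l1 by rewrite lt_def l1_neq0 (le_trans l2_ge0).
by rewrite divr_ge0 ?(ltW l1_gt0) //= ler_pdivrMr // mul1r.
Qed.

End MixtureInequalities.

Lemma mix_samplerE d (T : measurableType d) (R : realType)
    (mu : probability T R) (lam : R) (P : probability T R) (A : set T) :
  measurable A ->
  mix_sampler mu lam P A = (lam * fine (P A) + (1 - lam) * fine (mu A))%:E.
Proof. by move=> mA; rewrite EFinD !EFinM !fineK ?fin_num_measure. Qed.

Theorem lemma1 (d : measure_display) (T : measurableType d) (R : realType)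
  (mu : probability T R) (eps delta lam1 : R) :
  0 <= eps -> 0 <= delta <= 1 -> 0 <= lam1 <= 1 ->
  sampler_LDP (mix_sampler mu lam1) eps delta ->
  forall lam2 : R, 0 <= lam2 <= lam1 ->
  sampler_LDP (mix_sampler mu lam2) eps delta.
Proof.
move=> eps_ge0 /andP[delta_ge0 _] _ ldp1 lam2 lam2_range P P' A mA.
have := ldp1 P P' A mA.
rewrite !mix_samplerE // -EFinM -EFinD !lee_fin.
apply: mix_le_expD_antitone => //.
- by rewrite fine_ge0 // measure_ge0.
- by rewrite -expR0 ler_expR.
Qed.
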